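(* The variety $\mathcal V$ is arithmetical (i.e. congruence permutable and congruence distributive) and regular.
   Context: $\mathcal V$ is the variety of algebras $(L,\vee,\wedge,{}',0,1)$ that are bounded lattices with a complementation $'$ (i.e. $x\vee x'\approx1$, $x\wedge x'\approx0$) satisfying the identities $x\vee y'\approx y'\vee\big((x\vee y')\wedge y\big)$ and $x\wedge y\approx x\wedge\big((x\wedge y)\vee x'\big)$. An algebra is congruence permutable if $\Theta\circ\Phi=\Phi\circ\Theta$ for all congruences $\Theta,\Phi$; congruence distributive if its congruence lattice is distributive; regular if any two congruences having a common class coincide. A variety has such a property if all its members do. *)

Record V_algebra (T : Type) (join meet : T -> T -> T) (comp : T -> T) (zero one : T) : Prop := {
  join_assoc : forall x y z, join x (join y z) = join (join x y) z;
  meet_assoc : forall x y z, meet x (meet y z) = meet (meet x y) z;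
  join_comm : forall x y, join x y = join y x;
  meet_comm : forall x y, meet x y = meet y x;
  join_absorb : forall x y, join x (meet x y) = x;
  meet_absorb : forall x y, meet x (join x y) = x;
  join_zero : forall x, join x zero = x;
  meet_one : forall x, meet x one = x;
  comp_join : forall x, join x (comp x) = one;
  comp_meet : forall x, meet x (comp x) = zero;
  ident1 : forall x y, join x (comp y) = join (comp y) (meet (join x (comp y)) y);
  ident2 : forall x y, meet x y = meet x (join (meet x y) (comp x))
}.

Definition is_congruence {T : Type} (join meet : T -> T -> T) (comp : T -> T)
  (R : T -> T -> Prop) : Prop :=
  (forall x, R x x) /\
  (forall x y, R x y -> R y x) /\
  (forall x y z, R x y -> R y z -> R x z) /\
  (forall x1 y1 x2 y2, R x1 y1 -> R x2 y2 -> R (join x1 x2) (join y1 y2)) /\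
  (forall x1 y1 x2 y2, R x1 y1 -> R x2 y2 -> R (meet x1 x2) (meet y1 y2)) /\
  (forall x y, R x y -> R (comp x) (comp y)).

Definition rel_comp {T : Type} (R S : T -> T -> Prop) : T -> T -> Prop :=
  fun x z => exists y, R x y /\ S y z.

Definition rel_eq {T : Type} (R S : T -> T -> Prop) : Prop :=
  forall x y, R x y <-> S x y.

Definition cong_meet {T : Type} (R S : T -> T -> Prop) : T -> T -> Prop :=
  fun x y => R x y /\ S x y.

Definition cong_join {T : Type} (join meet : T -> T -> T) (comp : T -> T)
  (R S : T -> T -> Prop) : T -> T -> Prop :=
  fun x y => forall Q, is_congruence join meet comp Q ->
    (forall a b, R a b -> Q a b) -> (forall a b, S a b -> Q a b) -> Q x y.

Definition congruence_permutable {T : Type} (join meet : T -> T -> T) (comp : T -> T) : Prop :=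
  forall R S, is_congruence join meet comp R -> is_congruence join meet comp S ->
    rel_eq (rel_comp R S) (rel_comp S R).

Definition congruence_distributive {T : Type} (join meet : T -> T -> T) (comp : T -> T) : Prop :=
  forall R S U, is_congruence join meet comp R -> is_congruence join meet comp S ->
    is_congruence join meet comp U ->
    rel_eq (cong_meet R (cong_join join meet comp S U))
           (cong_join join meet comp (cong_meet R S) (cong_meet R U)).

(* regular: two congruences having a common class coincide. *)
Definition congruence_regular {T : Type} (join meet : T -> T -> T) (comp : T -> T) : Prop :=
  forall R S, is_congruence join meet comp R -> is_congruence join meet comp S ->
    (exists x y, forall z, R x z <-> S y z) -> rel_eq R S.

From Stdlib Require Import Setoid.

(* With [x <-> z := (x /\ z) \/ (x \/ z)'] (the biimplication in a Boolean
   algebra), the second identity of V gives [(x \/ z) /\ (x <-> z) = x /\ z].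
   Hence [p x y z := (x /\ (y <-> z)) \/ (z /\ (x <-> y))] is a Mal'cev term,
   so V is congruence permutable; the lattice median is a majority term, so V
   is also congruence distributive.  Moreover [R a b] iff [R (a <-> b) 1], so a
   congruence is determined by its class of 1, and that class can be recovered
   from any other class [x/R] using [x /\ u] and [x \/ u'], whence regularity. *)

Section TermConditions.
Context {T : Type}.
Implicit Types (R S U : T -> T -> Prop) (f : T -> T -> T -> T).

Definition compatible3 R f : Prop :=
  forall a a' b b' c c', R a a' -> R b b' -> R c c' -> R (f a b c) (f a' b' c').

Lemma rel_comp_comm_of_malcev f R S :
  (forall x z, f x x z = z) -> (forall x z, f x z z = x) ->
  (forall x, R x x) -> (forall x, S x x) -> compatible3 R f -> compatible3 S f ->
  forall x z, rel_comp R S x z -> rel_comp S R x z.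
Proof.
  intros fxxz fxzz Rrefl Srefl Rf Sf x z [y [Rxy Syz]].
  exists (f x y z); split.
  - rewrite <- (fxzz x y) at 1. apply Sf; auto.
  - rewrite <- (fxxz y z) at 2. apply Rf; auto.
Qed.

Lemma meet_rel_comp_of_majority f R S U :
  (forall x y, f x x y = x) -> (forall x y, f x y y = y) -> (forall x w, f x w x = x) ->
  (forall x, R x x) -> (forall x, S x x) -> (forall x, U x x) ->
  compatible3 R f -> compatible3 S f -> compatible3 U f ->
  forall x y, R x y -> rel_comp S U x y ->
  rel_comp (cong_meet R S) (cong_meet R U) x y.
Proof.
  intros fxxy fxyy fxwx Rrefl Srefl Urefl Rf Sf Uf x y Rxy [w [Sxw Uwy]].
  exists (f x w y); split; split.
  - rewrite <- (fxwx x w) at 1. apply Rf; auto.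
  - rewrite <- (fxxy x y) at 1. apply Sf; auto.
  - rewrite <- (fxwx y w) at 2. apply Rf; auto.
  - rewrite <- (fxyy x y) at 2. apply Uf; auto.
Qed.

End TermConditions.

Section Congruences.
Context {T : Type} {join meet : T -> T -> T} {comp : T -> T}.
Implicit Types (R S U : T -> T -> Prop).

Lemma congruence_refl R : is_congruence join meet comp R -> forall x, R x x.
Proof. intros [H _]; exact H. Qed.

Lemma congruence_sym R : is_congruence join meet comp R -> forall x y, R x y -> R y x.
Proof. intros [_ [H _]]; exact H. Qed.

Lemma congruence_trans R :
  is_congruence join meet comp R -> forall x y z, R x y -> R y z -> R x z.
Proof. intros [_ [_ [H _]]]; exact H. Qed.

Lemma congruence_join R : is_congruence join meet comp R ->
  forall x1 y1 x2 y2, R x1 y1 -> R x2 y2 -> R (join x1 x2) (join y1 y2).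
Proof. intros [_ [_ [_ [H _]]]]; exact H. Qed.

Lemma congruence_meet R : is_congruence join meet comp R ->
  forall x1 y1 x2 y2, R x1 y1 -> R x2 y2 -> R (meet x1 x2) (meet y1 y2).
Proof. intros [_ [_ [_ [_ [H _]]]]]; exact H. Qed.

Lemma congruence_comp R :
  is_congruence join meet comp R -> forall x y, R x y -> R (comp x) (comp y).
Proof. intros [_ [_ [_ [_ [_ H]]]]]; exact H. Qed.

Lemma rel_comp_congruence S U :
  is_congruence join meet comp S -> is_congruence join meet comp U ->
  (forall x y, rel_comp U S x y -> rel_comp S U x y) ->
  is_congruence join meet comp (rel_comp S U).
Proof.
  intros HS HU US_SU.
  repeat split.
  - intros x. exists x; split; eapply congruence_refl; eauto.
  - intros x y [w [Sxw Uwy]]. apply US_SU.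
    exists w; split; eapply congruence_sym; eauto.
  - intros x y z [w [Sxw Uwy]] [v [Syv Uvz]].
    destruct (US_SU w v) as [t [Swt Utv]]; [exists y; auto|].
    exists t; split; eapply congruence_trans; eauto.
  - intros x1 y1 x2 y2 [w [H1 H2]] [v [H3 H4]]. exists (join w v).
    split; [eapply congruence_join | eapply congruence_join]; eauto.
  - intros x1 y1 x2 y2 [w [H1 H2]] [v [H3 H4]]. exists (meet w v).
    split; [eapply congruence_meet | eapply congruence_meet]; eauto.
  - intros x y [w [H1 H2]]. exists (comp w).
    split; eapply congruence_comp; eauto.
Qed.

Lemma cong_join_rel_comp S U :
  is_congruence join meet comp S -> is_congruence join meet comp U ->
  is_congruence join meet comp (rel_comp S U) ->
  forall x y, cong_join join meet comp S U x y -> rel_comp S U x y.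
Proof.
  intros HS HU HSU x y Hxy. apply Hxy; auto.
  - intros a b Sab. exists b; split; [|eapply congruence_refl]; eauto.
  - intros a b Uab. exists a; split; [eapply congruence_refl|]; eauto.
Qed.

Lemma rel_comp_cong_join S U x y :
  rel_comp S U x y -> cong_join join meet comp S U x y.
Proof.
  intros [w [Sxw Uwy]] Q HQ SQ UQ. eapply congruence_trans; eauto.
Qed.

Lemma cong_join_meet_distr_le R S U :
  is_congruence join meet comp R ->
  forall x y, cong_join join meet comp (cong_meet R S) (cong_meet R U) x y ->
  cong_meet R (cong_join join meet comp S U) x y.
Proof.
  intros HR x y Hxy. split.
  - apply Hxy; auto; intros a b [Rab _]; exact Rab.
  - intros Q HQ SQ UQ. apply Hxy; auto; intros a b [_ H]; auto.
Qed.

End Congruences.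

Arguments join_assoc {T join meet comp zero one}.
Arguments meet_assoc {T join meet comp zero one}.
Arguments join_comm {T join meet comp zero one}.
Arguments meet_comm {T join meet comp zero one}.
Arguments join_absorb {T join meet comp zero one}.
Arguments meet_absorb {T join meet comp zero one}.
Arguments join_zero {T join meet comp zero one}.
Arguments meet_one {T join meet comp zero one}.
Arguments comp_join {T join meet comp zero one}.
Arguments comp_meet {T join meet comp zero one}.
Arguments ident2 {T join meet comp zero one}.

Section VAlgebra.
Context {T : Type} {join meet : T -> T -> T} {comp : T -> T} {zero one : T}.

Definition biimp (x z : T) : T := join (meet x z) (comp (join x z)).

Definition malcev (x y z : T) : T := join (meet x (biimp y z)) (meet z (biimp x y)).

Definition median (x w y : T) : T := join (join (meet x w) (meet w y)) (meet y x).

Lemma congruence_compatible_malcev R :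
  is_congruence join meet comp R -> compatible3 R malcev.
Proof.
  intros HR a a' b b' c c' Ha Hb Hc.
  pose proof (congruence_join R HR). pose proof (congruence_meet R HR).
  pose proof (congruence_comp R HR).
  unfold malcev, biimp; auto 10.
Qed.

Lemma congruence_compatible_median R :
  is_congruence join meet comp R -> compatible3 R median.
Proof.
  intros HR a a' b b' c c' Ha Hb Hc.
  pose proof (congruence_join R HR). pose proof (congruence_meet R HR).
  unfold median; auto.
Qed.

Hypothesis HV : V_algebra T join meet comp zero one.

Lemma join_idem x : join x x = x.
Proof.
  rewrite <- (meet_absorb HV x x) at 2.
  apply (join_absorb HV).
Qed.

Lemma meet_idem x : meet x x = x.
Proof.
  rewrite <- (join_absorb HV x x) at 2.
  apply (meet_absorb HV).
Qed.

Lemma join_one x : join x one = one.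
Proof.
  rewrite (join_comm HV).
  rewrite <- (join_absorb HV one x) at 2.
  rewrite (meet_comm HV), (meet_one HV). reflexivity.
Qed.

Lemma comp_one : comp one = zero.
Proof. rewrite <- (comp_meet HV one), (meet_comm HV), (meet_one HV). reflexivity. Qed.

Lemma join_meet_biimp x z : meet (join x z) (biimp x z) = meet x z.
Proof.
  assert (E : meet (join x z) (meet x z) = meet x z).
  { rewrite (meet_comm HV), <- (meet_assoc HV), (join_comm HV x z), (meet_absorb HV).
    reflexivity. }
  pose proof (ident2 HV (join x z) (meet x z)) as H.
  rewrite E in H. symmetry; exact H.
Qed.

Lemma meet_biimp x z : meet x (biimp x z) = meet x z.
Proof.
  rewrite <- (meet_absorb HV x z) at 1.
  rewrite <- (meet_assoc HV), join_meet_biimp, (meet_assoc HV), meet_idem.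
  reflexivity.
Qed.

Lemma biimp_refl x : biimp x x = one.
Proof. unfold biimp. rewrite meet_idem, join_idem. apply (comp_join HV). Qed.

Lemma biimp_comm x z : biimp x z = biimp z x.
Proof. unfold biimp. rewrite (meet_comm HV x z), (join_comm HV x z). reflexivity. Qed.

Lemma malcev_xxz x z : malcev x x z = z.
Proof.
  unfold malcev. rewrite meet_biimp, biimp_refl, (meet_one HV), (join_comm HV).
  rewrite (meet_comm HV x z). apply (join_absorb HV).
Qed.

Lemma malcev_xzz x z : malcev x z z = x.
Proof.
  unfold malcev. rewrite biimp_refl, (meet_one HV), (biimp_comm x z), meet_biimp.
  rewrite (meet_comm HV z x). apply (join_absorb HV).
Qed.

Lemma median_xxy x y : median x x y = x.
Proof.
  unfold median. rewrite meet_idem, (join_absorb HV), (meet_comm HV y x).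
  apply (join_absorb HV).
Qed.

Lemma median_xyy x y : median x y y = y.
Proof.
  unfold median. rewrite meet_idem, (join_comm HV (meet x y) y), (meet_comm HV x y).
  rewrite !(join_absorb HV). reflexivity.
Qed.

Lemma median_xwx x w : median x w x = x.
Proof.
  unfold median. rewrite meet_idem, (meet_comm HV w x), join_idem, (join_comm HV).
  apply (join_absorb HV).
Qed.

Lemma congruence_biimp_one R : is_congruence join meet comp R ->
  forall a b, R a b <-> R (biimp a b) one.
Proof.
  intros HR a b. split; intros H.
  - rewrite <- (biimp_refl a). apply (congruence_sym R HR).
    pose proof (congruence_refl R HR a). pose proof (congruence_sym R HR a b H).
    pose proof (congruence_join R HR). pose proof (congruence_meet R HR).
    pose proof (congruence_comp R HR).
    unfold biimp; auto.
  - assert (Rmj : R (meet a b) (join a b)).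
    { pose proof (congruence_meet R HR _ _ _ _ (congruence_refl R HR (join a b)) H) as E.
      rewrite join_meet_biimp, (meet_one HV) in E. exact E. }
    pose proof (congruence_sym R HR _ _ Rmj) as Rjm.
    pose proof (congruence_meet R HR _ _ _ _ (congruence_refl R HR a) Rjm) as Ra.
    rewrite (meet_absorb HV), (meet_assoc HV), meet_idem in Ra.
    pose proof (congruence_meet R HR _ _ _ _ (congruence_refl R HR b) Rjm) as Rb.
    rewrite (join_comm HV a b), (meet_absorb HV), (meet_comm HV a b) in Rb.
    rewrite (meet_assoc HV), meet_idem, (meet_comm HV b a) in Rb.
    eapply (congruence_trans R HR); [exact Ra | apply (congruence_sym R HR); exact Rb].
Qed.

Lemma rel_eq_of_one_class R S :
  is_congruence join meet comp R -> is_congruence join meet comp S ->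
  (forall u, R u one <-> S u one) -> rel_eq R S.
Proof.
  intros HR HS H a b.
  rewrite (congruence_biimp_one R HR), (congruence_biimp_one S HS). apply H.
Qed.

(* The one-class of [R] is recovered from the class of [x]:
   [u = u \/ (x /\ u)] and [1 = u \/ (x \/ u')], where [x /\ u] and [x \/ u']
   both lie in the class of [x] when [u R 1]. *)
Lemma one_class_incl R S x :
  is_congruence join meet comp R -> is_congruence join meet comp S ->
  (forall z, R x z -> S x z) -> forall u, R u one -> S u one.
Proof.
  intros HR HS RS u Ru.
  assert (Sxm : S x (meet x u)).
  { apply RS. rewrite <- (meet_one HV x) at 1.
    apply (congruence_meet R HR);
      [apply (congruence_refl R HR) | apply (congruence_sym R HR), Ru]. }
  assert (Sxj : S x (join x (comp u))).
  { apply RS. rewrite <- (join_zero HV x) at 1. rewrite <- comp_one.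
    apply (congruence_join R HR); [apply (congruence_refl R HR) |].
    apply (congruence_comp R HR), (congruence_sym R HR), Ru. }
  assert (Eu : join u (meet x u) = u)
    by (rewrite (meet_comm HV x u); apply (join_absorb HV)).
  assert (E1 : join u (join x (comp u)) = one).
  { rewrite (join_comm HV u), <- (join_assoc HV), (join_comm HV (comp u) u).
    rewrite (comp_join HV). apply join_one. }
  rewrite <- Eu, <- E1.
  pose proof (congruence_refl S HS u) as Su.
  apply (congruence_trans S HS) with (join u x); apply (congruence_join S HS);
    [exact Su | apply (congruence_sym S HS), Sxm | exact Su | exact Sxj].
Qed.

Lemma V_congruence_permutable : congruence_permutable join meet comp.
Proof.
  intros R S HR HS x z.
  pose proof (congruence_refl R HR). pose proof (congruence_refl S HS).
  split; apply (rel_comp_comm_of_malcev malcev);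
    auto using malcev_xxz, malcev_xzz, congruence_compatible_malcev.
Qed.

Lemma V_congruence_distributive : congruence_distributive join meet comp.
Proof.
  intros R S U HR HS HU x y. split.
  - intros [Rxy SUxy]. apply rel_comp_cong_join.
    assert (HSU : is_congruence join meet comp (rel_comp S U)).
    { apply rel_comp_congruence; auto.
      intros a b. apply (V_congruence_permutable U S HU HS). }
    pose proof (congruence_refl R HR). pose proof (congruence_refl S HS).
    pose proof (congruence_refl U HU).
    apply (meet_rel_comp_of_majority median);
      auto using median_xxy, median_xyy, median_xwx, congruence_compatible_median.
    exact (cong_join_rel_comp S U HS HU HSU x y SUxy).
  - apply cong_join_meet_distr_le; exact HR.
Qed.

Lemma V_congruence_regular : congruence_regular join meet comp.
Proof.
  intros R S HR HS [x [y Hxy]].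
  assert (Syx : S y x) by (apply Hxy, (congruence_refl R HR)).
  assert (RS : forall z, R x z -> S x z).
  { intros z Rxz. apply (congruence_trans S HS) with y;
      [apply (congruence_sym S HS), Syx | apply Hxy, Rxz]. }
  assert (SR : forall z, S x z -> R x z).
  { intros z Sxz. apply Hxy. apply (congruence_trans S HS) with x; assumption. }
  apply rel_eq_of_one_class; auto.
  intros u; split; [apply (one_class_incl R S x) | apply (one_class_incl S R x)]; auto.
Qed.

End VAlgebra.

Theorem theorem2 :
  forall (T : Type) (join meet : T -> T -> T) (comp : T -> T) (zero one : T),
    V_algebra T join meet comp zero one ->
    (congruence_permutable join meet comp /\ congruence_distributive join meet comp) /\
    congruence_regular join meet comp.
Proof.
  intros T join meet comp zero one HV.
  split; [split|].
  - exact (V_congruence_permutable HV).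
  - exact (V_congruence_distributive HV).
  - exact (V_congruence_regular HV).
Qed.
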